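(* Let $\Gamma$ be a Deza graph with parameters $(n,k,k-1,a)$, $k>1$, $\beta=1$. Let $x$ be an $NA$-vertex and $y$ an $A$-vertex. Then (1) if $x$ and $y$ are adjacent, then $y$ and $y_b$ both lie in $N(x,x')$; (2) either all possible edges between $\{x,x',x_b,x_b'\}$ and $\{y,y_b\}$ are present, or there are no such edges.
   Context: A Deza graph with parameters $(n,k,b,a)$, $a\le b$, is a $k$-regular graph on $n$ vertices in which any two distinct vertices have $a$ or $b$ common neighbours; $\beta$ is the number of vertices $u\ne v$ with exactly $b$ common neighbours with a given vertex $v$. Since $\beta=1$, for each vertex $x$ let $x_b$ denote the unique vertex having $b=k-1$ common neighbours with $x$. A vertex $x$ is an $A$-vertex if $x$ is adjacent to $x_b$, and an $NA$-vertex otherwise. $N(x,y)$ is the set of common neighbours of $x$ and $y$. For an $NA$-vertex $x$, $x'$ denotes the unique neighbour of $x$ not adjacent to $x_b$, and $x_b'=(x')_b=(x_b)'$. *)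

From mathcomp Require Import all_boot.
Set Implicit Arguments. Unset Strict Implicit. Unset Printing Implicit Defensive.

(* A simple graph on a finite vertex type T is a symmetric irreflexive relation e. *)

Definition ncommon (T : finType) (e : rel T) (x y : T) : nat :=
  #|[set z | e x z && e y z]|.

Definition deza_graph (T : finType) (e : rel T) (n k b a : nat) : Prop :=
  [/\ symmetric e /\ irreflexive e, #|T| = n, a <= b,
      forall x : T, #|[set y | e x y]| = k
    & forall x y : T, x != y -> ncommon e x y = a \/ ncommon e x y = b].

Definition beta_eq (T : finType) (e : rel T) (b beta : nat) : Prop :=
  forall v : T, #|[set u | (u != v) && (ncommon e v u == b)]| = beta.

From mathcomp Require Import all_boot.
From mathcomp Require Import zify.

(* The vertex [partner v] sharing k-1 neighbours with v is a fixed-point-free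
   involution P.  Counting walks of length 3 in two ways ([A^3] is symmetric
   and [A^2 = aJ + (k-a)I + (k-1-a)P]) shows that the adjacency matrix A
   commutes with P once a < k-1.  For an NA-vertex u and its neighbour u' not
   adjacent to u_b, the a common neighbours of u and u' are permuted by P, so
   a is even.  If u were adjacent to an A-vertex y but u' were not, the common
   neighbours of u and y other than y_b would also be permuted by P, yet they
   number a-1.  Hence x and x' see y alike, and commutation with P carries
   this over to x_b, x_b' and y_b. *)

Set Implicit Arguments.
Unset Strict Implicit.
Unset Printing Implicit Defensive.

Lemma even_card_fixfree_involution (T : finType) (f : T -> T) (A : {set T}) :
  involutive f -> (forall x, f x != x) -> (forall x, x \in A -> f x \in A) ->
  ~~ odd #|A|.
Proof.
move=> fK fx_neq clA.
have order2 x : order f x = 2.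
  apply: (@order_cycle _ f [:: x; f x]); rewrite ?mem_head //=.
    by rewrite fK !eqxx.
  by rewrite inE eq_sym fx_neq.
have clA' : fclosed f A.
  by move=> u _ /eqP <-; apply/idP/idP => /clA; rewrite ?fK.
rewrite -(@fcard_order_set _ f (inv_inj fK) 2 A) //; first by rewrite oddM andbF.
by apply/subsetP => x _; rewrite inE order2.
Qed.

Lemma card_set_sum (T : finType) (P : pred T) : #|[set x | P x]| = \sum_x P x.
Proof. by rewrite -sum1dep_card big_mkcond; apply: eq_bigr => x _; case: (P x). Qed.

Section CommonNeighbours.

Variables (T : finType) (e : rel T).

Lemma ncommonC x y : ncommon e x y = ncommon e y x.
Proof. by apply: eq_card => z; rewrite !inE andbC. Qed.

Lemma ncommonE x y : ncommon e x y = \sum_z (e x z && e y z).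
Proof. exact: card_set_sum. Qed.

Lemma sum_adj_ncommonC : symmetric e -> forall u v,
  \sum_z e u z * ncommon e z v = \sum_z e v z * ncommon e z u.
Proof.
move=> esym u v.
have walks u' v' : \sum_z e u' z * ncommon e z v' =
    \sum_z \sum_w e u' z * e z w * e w v'.
  apply: eq_bigr => z _; rewrite ncommonE big_distrr; apply: eq_bigr => w _.
  by rewrite [e v' w]esym; case: (e u' z); case: (e z w); case: (e w v').
rewrite !walks exchange_big; apply: eq_bigr => w _; apply: eq_bigr => z _.
rewrite [e v w]esym [e w z]esym [e z u]esym.
by case: (e u z); case: (e z w); case: (e w v).
Qed.

End CommonNeighbours.

Section Partner.

Variables (T : finType) (e : rel T) (k : nat).

(* The default [v] is never returned when [beta_eq e k.-1 1] holds. *)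
Definition partner (v : T) : T :=
  odflt v [pick u | (u != v) && (ncommon e v u == k.-1)].

Hypothesis hbeta : beta_eq e k.-1 1.

Lemma partner_set v :
  [set u | (u != v) && (ncommon e v u == k.-1)] = [set partner v].
Proof.
have /eqP/cards1P [c Ec] := hbeta v; rewrite Ec /partner.
case: pickP => [u u_in | no_pick] /=.
  have : u \in [set u | (u != v) && (ncommon e v u == k.-1)] by rewrite inE.
  by rewrite Ec inE => /eqP ->.
by have := set11 c; rewrite -Ec inE no_pick.
Qed.

Lemma partner_neq v : partner v != v.
Proof. by have := set11 (partner v); rewrite -partner_set inE => /andP []. Qed.

Lemma ncommon_partner v : ncommon e v (partner v) = k.-1.
Proof.
by have := set11 (partner v); rewrite -partner_set inE => /andP [_ /eqP].
Qed.

Lemma partner_unique v u : u != v -> ncommon e v u = k.-1 -> u = partner v.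
Proof.
by move=> uv vu; apply/set1P; rewrite -partner_set inE uv vu eqxx.
Qed.

Lemma partnerK : involutive partner.
Proof.
move=> v; apply/esym/partner_unique; first by rewrite eq_sym partner_neq.
by rewrite ncommonC ncommon_partner.
Qed.

Lemma even_card_partner_closed (Z : {set T}) :
  (forall z, z \in Z -> partner z \in Z) -> ~~ odd #|Z|.
Proof. exact/even_card_fixfree_involution/partner_neq/partnerK. Qed.

End Partner.

Section DezaGraph.

Variables (T : finType) (e : rel T) (n k a : nat).
Hypotheses (hD : deza_graph e n k k.-1 a) (hbeta : beta_eq e k.-1 1).

Local Notation p := (partner e k).

Let esym : symmetric e. Proof. by case: hD => [[]]. Qed.
Let eirr : irreflexive e. Proof. by case: hD => [[]]. Qed.
Let a_le : a <= k.-1. Proof. by case: hD. Qed.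
Let regular x : #|[set y | e x y]| = k. Proof. by case: hD. Qed.
Let ncommon_ab u v : u != v -> ncommon e u v = a \/ ncommon e u v = k.-1.
Proof. by case: hD => _ _ _ _; apply. Qed.

Let adj_neq u v : e u v -> u != v.
Proof. by apply: contraTneq => ->; rewrite eirr. Qed.

Lemma ncommon_nonpartner u v : u != v -> v != p u -> ncommon e u v = a.
Proof.
move=> uv vpu; case: (ncommon_ab uv) => // vpartner; case/eqP: vpu.
by apply: (partner_unique hbeta); rewrite 1?eq_sym.
Qed.

Lemma ncommon_diag u : ncommon e u u = k.
Proof. by rewrite -(regular u); apply: eq_card => z; rewrite !inE andbb. Qed.

Lemma NAvertex_ltn_a u v : e u v -> ~~ e u (p u) -> a < k.-1.
Proof.
move=> uv upu; rewrite ltn_neqAle a_le andbT; apply: contraNneq upu => a_eq.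
suff <- : v = p u by [].
apply: (partner_unique hbeta); first by rewrite eq_sym adj_neq.
by case: (ncommon_ab (adj_neq uv)) => ->.
Qed.

Lemma sum_adj u : \sum_z e u z = k.
Proof. by rewrite -card_set_sum regular. Qed.

Lemma partner_adj_all_but v w z :
  e v w -> ~~ e (p v) w -> e v z -> z != w -> e (p v) z.
Proof.
move=> vw pvw vz zw.
have sub : [set t | e v t && e (p v) t] \subset [set t | e v t] :\ w.
  apply/subsetP => t; rewrite !inE => /andP [vt pvt]; rewrite vt andbT.
  by apply: contraNneq pvw => <-.
have : [set t | e v t && e (p v) t] == [set t | e v t] :\ w.
  have := cardsD1 w [set t | e v t]; rewrite inE vw regular.
  have := ncommon_partner hbeta v; rewrite /ncommon.
  by rewrite eqEcard sub /=; lia.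
move/eqP => E; have : z \in [set t | e v t] :\ w by rewrite !inE zw vz.
by rewrite -E inE => /andP [].
Qed.

Lemma ncommon_indicator z v :
  ncommon e z v = a + (k - a) * (z == v) + (k.-1 - a) * (z == p v).
Proof.
have := partner_neq hbeta v; have := a_le.
case: (eqVneq z v) => [-> | zv]; first by rewrite ncommon_diag eq_sym => _ /negbTE ->; lia.
case: (eqVneq z (p v)) => [-> | zpv]; first by rewrite ncommonC ncommon_partner //; lia.
by rewrite ncommonC ncommon_nonpartner // 1?eq_sym //; lia.
Qed.

Lemma sum_adj_ncommon u v : \sum_z e u z * ncommon e z v =
  a * k + (k - a) * e u v + (k.-1 - a) * e u (p v).
Proof.
have pick_adj w : \sum_z e u z * (z == w) = e u w.
  by rewrite (bigD1 w) //= eqxx muln1 big1 ?addn0 // => z /negbTE ->; rewrite muln0.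
under eq_bigr do rewrite ncommon_indicator !mulnDr [e u _ * (_ * _)]mulnCA
  [e u _ * ((k.-1 - a) * _)]mulnCA.
by rewrite !big_split -big_distrl -!big_distrr /= sum_adj !pick_adj mulnC.
Qed.

Hypothesis a_lt : a < k.-1.

Lemma adj_partnerC u v : e u (p v) = e (p u) v.
Proof.
have := sum_adj_ncommonC esym u v; rewrite !sum_adj_ncommon [e v u]esym [e v (p u)]esym.
by have := a_lt; case: (e u (p v)); case: (e (p u) v); case: (e u v) => /=; lia.
Qed.

Lemma adj_partner_sym u v : e (p u) v = e (p v) u.
Proof. by rewrite -adj_partnerC esym. Qed.

Lemma adj_partner_Avertex y z :
  e y (p y) -> z != y -> z != p y -> e z (p y) = e z y.
Proof.
move=> ypy zy zpy; rewrite ![e z _]esym; apply/idP/idP => [pyz | yz].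
  have pyy : e (p y) y by rewrite esym.
  by have := partner_adj_all_but pyy; rewrite partnerK // eirr; apply.
by apply: (partner_adj_all_but ypy); rewrite ?eirr.
Qed.

Lemma adj_NAvertex_Avertex u y : ~~ e u (p u) -> e y (p y) ->
  [/\ e u (p y) = e u y, e (p u) y = e u y & e (p u) (p y) = e u y].
Proof.
move=> upu ypy.
have uy : u != y by apply: contraNneq upu => ->.
have upy : u != p y by apply: contraNneq upu => ->; rewrite partnerK // esym.
have E := adj_partner_Avertex ypy uy upy.
by split; rewrite -?adj_partnerC ?partnerK.
Qed.

Section SpecialNeighbour.

Variables u u' : T.
Hypotheses (upu : ~~ e u (p u)) (uu' : e u u') (pu_u' : ~~ e (p u) u').

Let pu'_u : ~~ e (p u') u. Proof. by rewrite adj_partner_sym. Qed.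

Lemma special_neighbour_NA : ~~ e u' (p u').
Proof.
apply: contraNN pu'_u => u'pu'.
have upu' : u != p u' by apply: contraNneq upu => ->; rewrite partnerK // esym.
by apply: (partner_adj_all_but u'pu'); rewrite ?eirr // esym.
Qed.

Lemma even_a : ~~ odd a.
Proof.
have <- : ncommon e u u' = a.
  by apply: ncommon_nonpartner; [exact: adj_neq | apply: contraNneq upu => <-].
apply: (even_card_partner_closed hbeta) => z; rewrite !inE => /andP [uz u'z].
rewrite adj_partnerC [e u' _]adj_partnerC.
rewrite (partner_adj_all_but uu' pu_u' uz) ?(eq_sym z) ?adj_neq //=.
have u'u : e u' u by rewrite esym.
by apply: (partner_adj_all_but u'u pu'_u u'z); rewrite eq_sym adj_neq.
Qed.

Lemma special_neighbour_adj y : e y (p y) -> e u y -> e u' y.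
Proof.
move=> ypy uy; apply: contraT => u'y.
have [uy_py _ _] := adj_NAvertex_Avertex upu ypy.
pose Z := [set z | e u z && e y z] :\ p y.
have Z_closed z : z \in Z -> p z \in Z.
  rewrite !inE => /and3P [zpy uz yz]; rewrite adj_partnerC [e y _]adj_partnerC.
  apply/and3P; split.
  - by apply: contra_neq (adj_neq yz) => /(can_inj (partnerK hbeta)) ->.
  - apply: (partner_adj_all_but uu' pu_u' uz).
    by apply: contraNneq u'y => <-; rewrite esym.
  - by apply: (partner_adj_all_but ypy); rewrite ?eirr.
have : ncommon e u y = a.
  apply: ncommon_nonpartner; first by apply: contraNneq upu => ->.
  by apply: contraNneq upu => <-.
rewrite /ncommon (cardsD1 (p y)) inE uy_py uy ypy => a_eq.
by have := even_a; rewrite -a_eq /= (negPf (even_card_partner_closed hbeta Z_closed)).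
Qed.

End SpecialNeighbour.

End DezaGraph.

Theorem lemma18 (T : finType) (e : rel T) (n k a : nat)
  (hD : deza_graph e n k k.-1 a) (hk : 1 < k) (hbeta : beta_eq e k.-1 1)
  (x xb x' xb' y yb : T)
  (* xb = x_b, the unique vertex with k-1 common neighbours with x *)
  (hxb : xb != x) (hxbc : ncommon e x xb = k.-1)
  (* x is an NA-vertex *)
  (hNA : ~~ e x xb)
  (* x' = the unique neighbour of x not adjacent to x_b *)
  (hx' : e x x') (hx'b : ~~ e xb x')
  (* xb' = x_b' = (x')_b *)
  (hxb' : xb' != x') (hxb'c : ncommon e x' xb' = k.-1)
  (* yb = y_b *)
  (hyb : yb != y) (hybc : ncommon e y yb = k.-1)
  (* y is an A-vertex *)
  (hA : e y yb) :
  (e x y -> [/\ e x y, e x' y, e x yb & e x' yb]) /\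
  ((forall u v, u \in [:: x; x'; xb; xb'] -> v \in [:: y; yb] -> u != v -> e u v) \/
   (forall u v, u \in [:: x; x'; xb; xb'] -> v \in [:: y; yb] -> ~~ e u v)).
Proof.
have [[esym _] _ _ _ _] := hD.
have xb_eq := partner_unique hbeta hxb hxbc.
have xb'_eq := partner_unique hbeta hxb' hxb'c.
have yb_eq := partner_unique hbeta hyb hybc.
subst xb xb' yb.
have a_lt := NAvertex_ltn_a hD hbeta hx' hNA.
have hNA' := special_neighbour_NA hD hbeta a_lt hNA hx' hx'b.
have hx'x : e x' x by rewrite esym.
have x'y : e x' y = e x y.
  apply/idP/idP; last exact: (special_neighbour_adj hD hbeta a_lt hNA hx' hx'b hA).
  have px'_x : ~~ e (partner e k x') x by rewrite (adj_partner_sym hD hbeta a_lt).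
  exact: (special_neighbour_adj hD hbeta a_lt hNA' hx'x px'_x hA).
have [Ex1 Ex2 Ex3] := adj_NAvertex_Avertex hD hbeta a_lt hNA hA.
have [Ex'1 Ex'2 Ex'3] := adj_NAvertex_Avertex hD hbeta a_lt hNA' hA.
split; first by move=> xy; rewrite Ex1 Ex'1 x'y xy.
case xy : (e x y); [left => u v + + _ | right => u v];
  by rewrite !inE => /or4P [] /eqP -> /orP [] /eqP ->;
     rewrite ?(Ex1, Ex2, Ex3, Ex'1, Ex'2, Ex'3) ?x'y ?xy.
Qed.
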